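(* Let $n\ge 2$ and let $\mathbf{a}^{1},\mathbf{a}^{2}\in\mathbb{R}^{n}$ be linearly independent vectors. Let $l_{i}=\{t\mathbf{b}^{i}+\mathbf{c}^{i}:t\in\mathbb{R}\}$, $i=1,2,3$, be three distinct straight lines in $\mathbb{R}^{n}$ (so $\mathbf{b}^{i}\in\mathbb{R}^{n}\setminus\{\mathbf{0}\}$, $\mathbf{c}^{i}\in\mathbb{R}^{n}$), and let $L=l_{1}\cup l_{2}\cup l_{3}$. Then there exists a closed path $p=(\mathbf{x}^{1},\dots,\mathbf{x}^{m})$ with respect to the directions $\mathbf{a}^{1}$ and $\mathbf{a}^{2}$ such that all points of $p$ lie in $L$.
   Context: A path with respect to the directions $\mathbf{a}^{1},\mathbf{a}^{2}$ is a finite ordered tuple of points $(\mathbf{x}^{1},\dots,\mathbf{x}^{k})$ in $\mathbb{R}^{n}$ with $\mathbf{x}^{j}\neq\mathbf{x}^{j+1}$ for all $j$, such that the differences $\mathbf{x}^{j+1}-\mathbf{x}^{j}$ are perpendicular alternately to $\mathbf{a}^{1}$ and $\mathbf{a}^{2}$; i.e., for some ordering $(\mathbf{u},\mathbf{v})$ of $\{\mathbf{a}^{1},\mathbf{a}^{2}\}$ we have $\mathbf{u}\cdot\mathbf{x}^{1}=\mathbf{u}\cdot\mathbf{x}^{2}$, $\mathbf{v}\cdot\mathbf{x}^{2}=\mathbf{v}\cdot\mathbf{x}^{3}$, $\mathbf{u}\cdot\mathbf{x}^{3}=\mathbf{u}\cdot\mathbf{x}^{4}$, and so on. A tuple $(\mathbf{x}^{1},\dots,\mathbf{x}^{k})$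 is a closed path with respect to $\mathbf{a}^{1},\mathbf{a}^{2}$ if $k$ is even and $(\mathbf{x}^{1},\dots,\mathbf{x}^{k},\mathbf{x}^{1})$ is a path with respect to $\mathbf{a}^{1},\mathbf{a}^{2}$. *)

From HB Require Import structures.
From mathcomp Require Import all_boot all_order all_algebra.
From mathcomp Require Import reals.
Set Implicit Arguments. Unset Strict Implicit. Unset Printing Implicit Defensive.
Import Order.TTheory GRing.Theory Num.Theory.
Local Open Scope ring_scope.

Definition dotv (R : realType) (n : nat) (u v : 'rV[R]_n) : R :=
  \sum_(i < n) u 0 i * v 0 i.

(* (x^1,...,x^k) given as the sequence s is a path w.r.t. the ordered pair
   (u, v): consecutive points distinct, and the j-th step (0-based) is
   perpendicular to u when j is even, to v when j is odd. *)
Definition path_uv (R : realType) (n : nat) (u v : 'rV[R]_n)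
    (s : seq 'rV[R]_n) : Prop :=
  forall j : nat, (j.+1 < size s)%N ->
    nth 0 s j <> nth 0 s j.+1 /\
    (if odd j then dotv v (nth 0 s j) = dotv v (nth 0 s j.+1)
              else dotv u (nth 0 s j) = dotv u (nth 0 s j.+1)).

Definition is_path (R : realType) (n : nat) (a1 a2 : 'rV[R]_n)
    (s : seq 'rV[R]_n) : Prop :=
  (0 < size s)%N /\ (path_uv a1 a2 s \/ path_uv a2 a1 s).

Definition is_closed_path (R : realType) (n : nat) (a1 a2 : 'rV[R]_n)
    (s : seq 'rV[R]_n) : Prop :=
  (0 < size s)%N /\ ~~ odd (size s) /\ is_path a1 a2 (rcons s (nth 0 s 0)).

Definition on_line (R : realType) (n : nat) (b c x : 'rV[R]_n) : Prop :=
  exists t : R, x = t *: b + c.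

Definition same_line (R : realType) (n : nat) (b c b' c' : 'rV[R]_n) : Prop :=
  forall x, on_line b c x <-> on_line b' c' x.

(* Project R^n to the plane by x |-> (a1.x, a2.x): the steps of a closed path
   become vertical and horizontal moves.  If two distinct points of L have the
   same projection they already form a closed path, which is why neither the
   independence of a1, a2 nor n >= 2 is needed.  Otherwise the three lines
   project injectively onto three distinct plane lines.  If one of them is
   vertical (or horizontal, after exchanging a1 and a2), a rectangle with two
   corners on it and two on the other lines closes up.  If all three are graphs
   y = m_i x + k_i with m_i <> 0, a rectangle with two corners on one of them
   exists unless the lines are concurrent or all parallel; in that case a
   hexagon visiting every line twice closes up for all but finitely many
   starting abscissas. *)

From mathcomp Require Import all_boot all_order all_algebra.
From mathcomp Require Import reals ring lra.
From Stdlib Require Import Classical_Prop.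
Set Implicit Arguments. Unset Strict Implicit. Unset Printing Implicit Defensive.
Import Order.TTheory GRing.Theory Num.Theory.
Local Open Scope ring_scope.

Definition cofinite (T : eqType) (P : T -> Prop) :=
  exists s : seq T, forall x, x \notin s -> P x.

Section Cofinite.
Variables T U : eqType.

Lemma cofiniteI (P Q : T -> Prop) :
  cofinite P -> cofinite Q -> cofinite (fun x => P x /\ Q x).
Proof.
move=> [s hs] [t ht]; exists (s ++ t) => x; rewrite mem_cat negb_or.
by case/andP => /hs ? /ht.
Qed.

Lemma cofinite_comp (P : U -> Prop) (f : T -> U) (g : U -> T) :
  cancel f g -> cofinite P -> cofinite (fun x => P (f x)).
Proof.
move=> fK [s hs]; exists (map g s) => x hx; apply: hs.
by apply: contra hx => /(map_f g); rewrite fK.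
Qed.

Lemma cofinite_neq (q : T) : cofinite (fun x => x != q).
Proof. by exists [:: q] => x; rewrite inE. Qed.

End Cofinite.

Section RealField.
Variable R : realFieldType.

Lemma exists_gt_seq (s : seq R) : exists x, forall y, y \in s -> y < x.
Proof.
elim: s => [|y s [x hx]]; first by exists 0.
exists (Num.max x (y + 1)) => z; rewrite inE => /predU1P[->|/hx zx].
  by rewrite lt_max ltrDl ltr01 orbT.
by rewrite lt_max zx.
Qed.

Lemma cofinite_ex (P : R -> Prop) : cofinite P -> exists x, P x.
Proof.
move=> [s hs]; have [x hx] := exists_gt_seq s.
by exists x; apply: hs; apply: contraTN isT => /hx; rewrite ltxx.
Qed.

Lemma cofinite_neq_affine (m k m' k' : R) :
  (m, k) != (m', k') -> cofinite (fun x => m * x + k != m' * x + k').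
Proof.
rewrite xpair_eqE negb_and; have [-> /= kk'|mm' _] := eqVneq m m'.
  by exists [::] => x _; rewrite (inj_eq (addrI _)).
exists [:: (k' - k) / (m - m')] => x; rewrite inE; apply: contra => /eqP e.
have -> : k' - k = x * (m - m') by rewrite mulrBr ![x * _]mulrC; lra.
by rewrite mulfK ?subr_eq0.
Qed.

Lemma equal_slopes (m1 m2 m3 : R) :
  m1 ^+ 2 = m2 * m3 -> m2 ^+ 2 = m1 * m3 -> m3 ^+ 2 = m1 * m2 -> m2 = m1 /\ m3 = m1.
Proof.
move=> e1 e2 e3.
have sum0 : (m2 - m1) ^+ 2 + (m3 - m1) ^+ 2 + (m3 - m2) ^+ 2 = 0.
  by rewrite !sqrrB e1 e2 e3; ring.
have := sqr_ge0 (m2 - m1); have := sqr_ge0 (m3 - m1); have := sqr_ge0 (m3 - m2).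
move=> h1 h2 h3; split; apply/eqP; rewrite -subr_eq0 -sqrf_eq0; apply/eqP; lra.
Qed.

End RealField.

(* The determinant of the rows [m_i, k_i, 1]: it vanishes exactly when the
   lines y = m_i x + k_i pass through a common point or are all parallel. *)
Definition lines_det (R : comRingType) (m1 k1 m2 k2 m3 k3 : R) :=
  m1 * (k2 - k3) + m2 * (k3 - k1) + m3 * (k1 - k2).

Lemma lines_det_swap (R : comRingType) (m1 k1 m2 k2 m3 k3 : R) :
  lines_det m2 k2 m1 k1 m3 k3 = - lines_det m1 k1 m2 k2 m3 k3.
Proof. by rewrite /lines_det; ring. Qed.

Lemma lines_det_rot (R : comRingType) (m1 k1 m2 k2 m3 k3 : R) :
  lines_det m3 k3 m1 k1 m2 k2 = lines_det m1 k1 m2 k2 m3 k3.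
Proof. by rewrite /lines_det; ring. Qed.

Lemma lines_det_parallel (R : comRingType) (m k1 k2 k3 : R) :
  lines_det m k1 m k2 m k3 = 0.
Proof. by rewrite /lines_det; ring. Qed.

Section Lines.
Variables (R : realType) (n : nat).
Implicit Types (a b c x y : 'rV[R]_n).

Lemma dotv_line a b c t : dotv a (t *: b + c) = t * dotv a b + dotv a c.
Proof.
rewrite /dotv mulr_sumr -big_split /=; apply: eq_bigr => i _.
by rewrite !mxE; ring.
Qed.

Definition line_at a b c (w : R) := ((w - dotv a c) / dotv a b) *: b + c.

Lemma on_line_at a b c w : on_line b c (line_at a b c w).
Proof. by exists ((w - dotv a c) / dotv a b). Qed.

Lemma dotv_line_at a b c w : dotv a b != 0 -> dotv a (line_at a b c w) = w.
Proof. by move=> ab0; rewrite dotv_line mulfVK // subrK. Qed.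

Lemma same_line_sym b c b' c' : ~ same_line b c b' c' -> ~ same_line b' c' b c.
Proof. by move=> ns s; apply: ns => x; rewrite s. Qed.

Definition perp_step a x y := x <> y /\ dotv a x = dotv a y.

Lemma perp_step_of_dotv a' a x y :
  dotv a x = dotv a y -> dotv a' x != dotv a' y -> perp_step a x y.
Proof. by move=> e /eqP ne; split=> // xy; apply: ne; rewrite xy. Qed.

End Lines.

Section Projection.
Variables (R : realType) (n : nat) (a1 a2 : 'rV[R]_n).
Implicit Types (b c x y : 'rV[R]_n) (L P Q : 'rV[R]_n -> Prop) (m k q w : R).

Definition same_proj x y := dotv a1 x = dotv a1 y /\ dotv a2 x = dotv a2 y.

Definition proj_inj_on L := forall x y, L x -> L y -> same_proj x y -> x = y.

Definition closed_path_in L :=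
  exists s, is_closed_path a1 a2 s /\ forall x, x \in s -> L x.

Lemma closed_path_in4 L A B C D :
  L A -> L B -> L C -> L D ->
  perp_step a1 A B -> perp_step a2 B C -> perp_step a1 C D -> perp_step a2 D A ->
  closed_path_in L.
Proof.
move=> LA LB LC LD [? ?] [? ?] [? ?] [? ?]; exists [:: A; B; C; D]; split.
  by do 3!split=> //; left; case=> [|[|[|[|j]]]].
by move=> x; rewrite !inE => /or4P[] /eqP->.
Qed.

Lemma closed_path_in6 L A B C D E F :
  L A -> L B -> L C -> L D -> L E -> L F ->
  perp_step a1 A B -> perp_step a2 B C -> perp_step a1 C D ->
  perp_step a2 D E -> perp_step a1 E F -> perp_step a2 F A ->
  closed_path_in L.
Proof.
move=> LA LB LC LD LE LF [? ?] [? ?] [? ?] [? ?] [? ?] [? ?].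
exists [:: A; B; C; D; E; F]; split.
  by do 3!split=> //; left; case=> [|[|[|[|[|[|j]]]]]].
by move=> x; rewrite !inE; do ![case/orP=> [/eqP->//|]]; move/eqP->.
Qed.

(* Two distinct points of [L] with the same projection form a closed path
   [x; y; x; y]. *)
Lemma closed_path_in_or_proj_inj L : closed_path_in L \/ proj_inj_on L.
Proof.
have [[x [y [Lx [Ly [xy [e1 e2]]]]]]|none] :=
  classic (exists x y, L x /\ L y /\ x <> y /\ same_proj x y).
  have yx : y <> x by move=> /esym.
  by left; apply: (closed_path_in4 Lx Ly Lx Ly); split.
right=> x y Lx Ly e; apply: NNPP => xy; apply: none; exists x, y; tauto.
Qed.

Definition graph_in L m k :=
  forall w, exists2 y, L y & dotv a1 y = w /\ dotv a2 y = m * w + k.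

Definition vertical_in L q :=
  forall w, exists2 y, L y & dotv a1 y = q /\ dotv a2 y = w.

Lemma graph_in_sub P Q m k :
  (forall x, P x -> Q x) -> graph_in P m k -> graph_in Q m k.
Proof. by move=> PQ g w; have [y /PQ] := g w; exists y. Qed.

Lemma vertical_in_sub P Q q :
  (forall x, P x -> Q x) -> vertical_in P q -> vertical_in Q q.
Proof. by move=> PQ v w; have [y /PQ] := v w; exists y. Qed.

Lemma closed_path_of_vertical_rect L q B C :
  vertical_in L q -> L B -> L C -> dotv a1 B = dotv a1 C -> dotv a1 B != q ->
  dotv a2 B != dotv a2 C -> closed_path_in L.
Proof.
move=> v LB LC BC1 Bq BC2.
have [ZB LZB [ZB1 ZB2]] := v (dotv a2 B); have [ZC LZC [ZC1 ZC2]] := v (dotv a2 C).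
apply: (closed_path_in4 LB LC LZC LZB).
- exact: perp_step_of_dotv BC1 BC2.
- by apply: (perp_step_of_dotv (a' := a1)); rewrite ?ZC2 // ZC1 -BC1.
- by apply: (perp_step_of_dotv (a' := a2)); rewrite ?ZC1 ?ZB1 // ZC2 ZB2 eq_sym.
- by apply: (perp_step_of_dotv (a' := a1)); rewrite ?ZB2 // ZB1 eq_sym.
Qed.

Lemma closed_path_of_verticals L q q' :
  vertical_in L q -> vertical_in L q' -> q != q' -> closed_path_in L.
Proof.
move=> v v' qq'; have [B LB [B1 B2]] := v' 0; have [C LC [C1 C2]] := v' 1.
apply: (closed_path_of_vertical_rect v LB LC); rewrite ?B1 ?C1 ?B2 ?C2 //.
  by rewrite eq_sym.
by rewrite eq_sym oner_eq0.
Qed.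

Lemma closed_path_of_vertical_graphs L q m k m' k' :
  vertical_in L q -> graph_in L m k -> graph_in L m' k' -> (m, k) != (m', k') ->
  closed_path_in L.
Proof.
move=> v g g' mk.
have [w [wq mkw]] :=
  cofinite_ex (cofiniteI (cofinite_neq q) (cofinite_neq_affine mk)).
have [B LB [B1 B2]] := g w; have [C LC [C1 C2]] := g' w.
by apply: (closed_path_of_vertical_rect v LB LC); rewrite ?B1 ?C1 ?B2 ?C2.
Qed.

Lemma closed_path_of_graph_quad L mi ki mj kj ml kl :
  graph_in L mi ki -> graph_in L mj kj -> graph_in L ml kl ->
  mi != 0 -> mi ^+ 2 != mj * ml -> lines_det mi ki mj kj ml kl != 0 ->
  closed_path_in L.
Proof.
move=> gi gj gl mi0 D0 det0; rewrite -subr_eq0 in D0.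
pose u1 := (mi * (kl - ki) - ml * (ki - kj)) / (mi ^+ 2 - mj * ml).
pose u2 := (mj * (kl - ki) - mi * (ki - kj)) / (mi ^+ 2 - mj * ml).
have e1 : mj * u1 + kj = mi * u2 + ki by rewrite /u1 /u2; field.
have e2 : ml * u2 + kl = mi * u1 + ki by rewrite /u1 /u2; field.
have u12 : u1 != u2.
  rewrite -subr_eq0.
  rewrite (_ : u1 - u2 = - lines_det mi ki mj kj ml kl / (mi ^+ 2 - mj * ml)).
    by rewrite mulf_neq0 ?oppr_eq0 ?invr_eq0.
  by rewrite /u1 /u2 /lines_det; field.
have v12 : mi * u1 + ki != mi * u2 + ki.
  by rewrite (inj_eq (addIr _)) (inj_eq (mulfI mi0)).
have [A LA [A1 A2]] := gi u1; have [B LB [B1 B2]] := gj u1.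
have [C LC [C1 C2]] := gi u2; have [D LD [D1 D2]] := gl u2.
apply: (closed_path_in4 LA LB LC LD).
- by apply: (perp_step_of_dotv (a' := a2)); rewrite ?A1 ?B1 // A2 B2 e1.
- by apply: (perp_step_of_dotv (a' := a1)); rewrite ?B2 ?C2 ?e1 // B1 C1.
- by apply: (perp_step_of_dotv (a' := a2)); rewrite ?C1 ?D1 // C2 D2 e2 eq_sym.
- by apply: (perp_step_of_dotv (a' := a1)); rewrite ?D2 ?A2 ?e2 // D1 A1 eq_sym.
Qed.

Lemma closed_path_of_concurrent_graphs L m1 k1 m2 k2 m3 k3 :
  graph_in L m1 k1 -> graph_in L m2 k2 -> graph_in L m3 k3 ->
  m1 != 0 -> m2 != 0 -> m3 != 0 ->
  (m1, k1) != (m2, k2) -> (m2, k2) != (m3, k3) -> (m1, k1) != (m3, k3) ->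
  lines_det m1 k1 m2 k2 m3 k3 = 0 -> closed_path_in L.
Proof.
move=> g1 g2 g3 m10 m20 m30 d12 d23 d13 det0.
pose sep t := [/\ m1 * t + k1 != m2 * t + k2, m2 * t + k2 != m3 * t + k3
                 & m1 * t + k1 != m3 * t + k3].
(* The hexagon moves vertically from line 1 to line 2, horizontally to line 3
   (reaching abscissa [phi w]), vertically to line 1, horizontally to line 2
   ([psi (phi w)]), vertically to line 3 and horizontally back to its start;
   the last move exists because [lines_det] vanishes ([closeE]). *)
pose phi t := m2 / m3 * t + (k2 - k3) / m3.
pose psi t := m1 / m2 * t + (k1 - k2) / m2.
have phiE t : m3 * phi t + k3 = m2 * t + k2 by rewrite /phi; field.
have psiE t : m2 * psi t + k2 = m1 * t + k1 by rewrite /psi; field.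
have phiK : cancel phi (fun t => (m3 * t + k3 - k2) / m2).
  by move=> t; rewrite phiE; field.
have psiK : cancel psi (fun t => (m2 * t + k2 - k1) / m1).
  by move=> t; rewrite psiE; field.
have closeE t : m3 * psi (phi t) + k3 = m1 * t + k1.
  apply/eqP; rewrite -subr_eq0 (_ : _ - _ = lines_det m1 k1 m2 k2 m3 k3 / m2).
    by rewrite det0 mul0r.
  by rewrite /psi /phi /lines_det; field; apply/andP.
have sepF : cofinite sep.
  have [A hA] := cofiniteI (cofinite_neq_affine d12)
                   (cofiniteI (cofinite_neq_affine d23) (cofinite_neq_affine d13)).
  by exists A => t /hA [? []].
have : cofinite (fun w => sep w /\ sep (phi w) /\ sep (psi (phi w))).
  apply: (cofiniteI sepF); apply: cofiniteI; first exact: cofinite_comp phiK sepF.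
  exact: cofinite_comp (can_comp psiK phiK) sepF.
case/cofinite_ex => w [[s12 s23 s13] [[t12 _ t13] [_ r23 _]]].
have [P1 L1 [P1a P1b]] := g1 w; have [P2 L2 [P2a P2b]] := g2 w.
have [P3 L3 [P3a P3b]] := g3 (phi w); have [P4 L4 [P4a P4b]] := g1 (phi w).
have [P5 L5 [P5a P5b]] := g2 (psi (phi w)).
have [P6 L6 [P6a P6b]] := g3 (psi (phi w)).
apply: (closed_path_in6 L1 L2 L3 L4 L5 L6).
- by apply: (perp_step_of_dotv (a' := a2)); rewrite ?P1a ?P2a // P1b P2b.
- apply: (perp_step_of_dotv (a' := a1)); first by rewrite P2b P3b phiE.
  by rewrite P2a P3a; apply: contraNneq s23 => e; rewrite {2}e phiE.
- by apply: (perp_step_of_dotv (a' := a2)); rewrite ?P3a ?P4a // P3b P4b eq_sym.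
- apply: (perp_step_of_dotv (a' := a1)); first by rewrite P4b P5b psiE.
  by rewrite P4a P5a; apply: contraNneq t12 => e; rewrite {2}e psiE.
- by apply: (perp_step_of_dotv (a' := a2)); rewrite ?P5a ?P6a // P5b P6b.
- apply: (perp_step_of_dotv (a' := a1)); first by rewrite P6b P1b closeE.
  by rewrite P6a P1a; apply: contraNneq s13 => e; rewrite -{2}e closeE.
Qed.

Lemma closed_path_of_graphs L m1 k1 m2 k2 m3 k3 :
  graph_in L m1 k1 -> graph_in L m2 k2 -> graph_in L m3 k3 ->
  m1 != 0 -> m2 != 0 -> m3 != 0 ->
  (m1, k1) != (m2, k2) -> (m2, k2) != (m3, k3) -> (m1, k1) != (m3, k3) ->
  closed_path_in L.
Proof.
move=> g1 g2 g3 m10 m20 m30 d12 d23 d13.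
have [det0|det0] := eqVneq (lines_det m1 k1 m2 k2 m3 k3) 0.
  exact: closed_path_of_concurrent_graphs det0.
have [e1|D1] := eqVneq (m1 ^+ 2) (m2 * m3).
  have [e2|D2] := eqVneq (m2 ^+ 2) (m1 * m3).
    have [e3|D3] := eqVneq (m3 ^+ 2) (m1 * m2).
      have [m21 m31] := equal_slopes e1 e2 e3.
      by move: det0; rewrite m21 m31 lines_det_parallel eqxx.
    by apply: closed_path_of_graph_quad g3 g1 g2 m30 D3 _; rewrite lines_det_rot.
  apply: closed_path_of_graph_quad g2 g1 g3 m20 D2 _.
  by rewrite lines_det_swap oppr_eq0.
exact: closed_path_of_graph_quad g1 g2 g3 m10 D1 det0.
Qed.

Definition slope b := dotv a2 b / dotv a1 b.

Definition intercept b c := dotv a2 c - slope b * dotv a1 c.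

Lemma graph_in_line b c :
  dotv a1 b != 0 -> graph_in (on_line b c) (slope b) (intercept b c).
Proof.
move=> b0 w; exists (line_at a1 b c w); first exact: on_line_at.
split; first exact: dotv_line_at.
by rewrite /line_at dotv_line /intercept /slope; field.
Qed.

Lemma dotv_on_line_graph b c y : dotv a1 b != 0 -> on_line b c y ->
  dotv a2 y = slope b * dotv a1 y + intercept b c.
Proof. by move=> b0 [t ->]; rewrite !dotv_line /intercept /slope; field. Qed.

Lemma dotv_on_vertical_line b c y : dotv a1 b = 0 -> on_line b c y ->
  dotv a1 y = dotv a1 c.
Proof. by move=> b0 [t ->]; rewrite dotv_line b0 mulr0 add0r. Qed.

(* A line on which the projection is injective cannot be orthogonal to both
   [a1] and [a2]. *)
Lemma vertical_in_line L b c :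
  proj_inj_on L -> (forall x, on_line b c x -> L x) -> b != 0 -> dotv a1 b = 0 ->
  vertical_in (on_line b c) (dotv a1 c).
Proof.
move=> inj lL b0 p0.
have r0 : dotv a2 b != 0.
  apply: contra_neq b0 => r0.
  have l0 : on_line b c c by exists 0; rewrite scale0r add0r.
  have l1 : on_line b c (b + c) by exists 1; rewrite scale1r.
  have /(congr1 (fun x => x - c)) : b + c = c.
    apply: inj (lL _ l1) (lL _ l0) _.
    by split; rewrite -{1}[b]scale1r dotv_line ?p0 ?r0 mulr0 add0r.
  by rewrite addrK subrr.
move=> w; exists (line_at a2 b c w); first exact: on_line_at.
by split; [apply: dotv_on_vertical_line (on_line_at _ _ _ _) | exact: dotv_line_at].
Qed.

Definition proj_sub P Q := forall y, P y -> exists2 x, Q x & same_proj x y.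

Lemma same_line_of_proj L b c b' c' : proj_inj_on L ->
  (forall x, on_line b c x -> L x) -> (forall x, on_line b' c' x -> L x) ->
  proj_sub (on_line b c) (on_line b' c') -> proj_sub (on_line b' c') (on_line b c) ->
  same_line b c b' c'.
Proof.
move=> inj lL lL' sub sub' y; split=> ly.
  by have [x lx e] := sub y ly; rewrite -(inj x y (lL' x lx) (lL y ly) e).
by have [x lx e] := sub' y ly; rewrite -(inj x y (lL x lx) (lL' y ly) e).
Qed.

Lemma proj_sub_vertical P Q q : vertical_in Q q ->
  (forall y, P y -> dotv a1 y = q) -> proj_sub P Q.
Proof.
move=> v Pq y Py; have [x Qx [x1 x2]] := v (dotv a2 y).
by exists x; rewrite // /same_proj x1 Pq.
Qed.

Lemma proj_sub_graph P Q m k : graph_in Q m k ->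
  (forall y, P y -> dotv a2 y = m * dotv a1 y + k) -> proj_sub P Q.
Proof.
move=> g Pg y Py; have [x Qx [x1 x2]] := g (dotv a1 y).
by exists x; rewrite // /same_proj x1 x2 Pg.
Qed.

Lemma vertical_lines_neq L b c b' c' : proj_inj_on L ->
  (forall x, on_line b c x -> L x) -> (forall x, on_line b' c' x -> L x) ->
  b != 0 -> b' != 0 -> dotv a1 b = 0 -> dotv a1 b' = 0 -> ~ same_line b c b' c' ->
  dotv a1 c != dotv a1 c'.
Proof.
move=> inj lL lL' b0 b0' p0 p0' ns; apply: contra_not_neq ns => e.
apply: (same_line_of_proj inj lL lL').
  apply: proj_sub_vertical (vertical_in_line inj lL' b0' p0') _ => y.
  by move/(dotv_on_vertical_line p0) ->.
apply: proj_sub_vertical (vertical_in_line inj lL b0 p0) _ => y.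
by move/(dotv_on_vertical_line p0') ->.
Qed.

Lemma graph_lines_neq L b c b' c' : proj_inj_on L ->
  (forall x, on_line b c x -> L x) -> (forall x, on_line b' c' x -> L x) ->
  dotv a1 b != 0 -> dotv a1 b' != 0 -> ~ same_line b c b' c' ->
  (slope b, intercept b c) != (slope b', intercept b' c').
Proof.
move=> inj lL lL' p0 p0' ns; apply: contra_not_neq ns => -[e1 e2].
apply: (same_line_of_proj inj lL lL').
  apply: proj_sub_graph (graph_in_line c' p0') _ => y.
  by rewrite -e1 -e2; apply: dotv_on_line_graph.
apply: proj_sub_graph (graph_in_line c p0) _ => y.
by rewrite e1 e2; apply: dotv_on_line_graph.
Qed.

Lemma closed_path_of_vertical_line L bI cI bJ cJ bK cK : proj_inj_on L ->
  (forall x, on_line bI cI x -> L x) -> (forall x, on_line bJ cJ x -> L x) ->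
  (forall x, on_line bK cK x -> L x) -> bI != 0 -> bJ != 0 -> bK != 0 ->
  ~ same_line bI cI bJ cJ -> ~ same_line bI cI bK cK -> ~ same_line bJ cJ bK cK ->
  dotv a1 bI = 0 -> closed_path_in L.
Proof.
move=> inj lI lJ lK bI0 bJ0 bK0 nIJ nIK nJK pI.
have vI := vertical_in_sub lI (vertical_in_line inj lI bI0 pI).
have [pJ|pJ] := eqVneq (dotv a1 bJ) 0.
  have vJ := vertical_in_sub lJ (vertical_in_line inj lJ bJ0 pJ).
  apply: closed_path_of_verticals vI vJ _.
  exact: vertical_lines_neq inj lI lJ bI0 bJ0 pI pJ nIJ.
have [pK|pK] := eqVneq (dotv a1 bK) 0.
  have vK := vertical_in_sub lK (vertical_in_line inj lK bK0 pK).
  apply: closed_path_of_verticals vI vK _.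
  exact: vertical_lines_neq inj lI lK bI0 bK0 pI pK nIK.
apply: closed_path_of_vertical_graphs vI (graph_in_sub lJ (graph_in_line cJ pJ))
                                         (graph_in_sub lK (graph_in_line cK pK)) _.
exact: graph_lines_neq inj lJ lK pJ pK nJK.
Qed.

Lemma closed_path_of_graph_lines L b1 c1 b2 c2 b3 c3 : proj_inj_on L ->
  (forall x, on_line b1 c1 x -> L x) -> (forall x, on_line b2 c2 x -> L x) ->
  (forall x, on_line b3 c3 x -> L x) ->
  ~ same_line b1 c1 b2 c2 -> ~ same_line b1 c1 b3 c3 -> ~ same_line b2 c2 b3 c3 ->
  dotv a1 b1 != 0 -> dotv a1 b2 != 0 -> dotv a1 b3 != 0 ->
  dotv a2 b1 != 0 -> dotv a2 b2 != 0 -> dotv a2 b3 != 0 ->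
  closed_path_in L.
Proof.
move=> inj l1 l2 l3 n12 n13 n23 p1 p2 p3 r1 r2 r3.
apply: (closed_path_of_graphs (graph_in_sub l1 (graph_in_line c1 p1))
                              (graph_in_sub l2 (graph_in_line c2 p2))
                              (graph_in_sub l3 (graph_in_line c3 p3))).
- by rewrite mulf_neq0 ?invr_eq0.
- by rewrite mulf_neq0 ?invr_eq0.
- by rewrite mulf_neq0 ?invr_eq0.
- exact: graph_lines_neq inj l1 l2 p1 p2 n12.
- exact: graph_lines_neq inj l2 l3 p2 p3 n23.
- exact: graph_lines_neq inj l1 l3 p1 p3 n13.
Qed.

End Projection.

Lemma closed_path_in_swap (R : realType) (n : nat) (a1 a2 : 'rV[R]_n) L :
  closed_path_in a2 a1 L -> closed_path_in a1 a2 L.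
Proof.
move=> [s [[s0 [even [s1 p]]] sL]]; exists s; do 4!split=> //.
by case: p; [right | left].
Qed.

Lemma proj_inj_on_swap (R : realType) (n : nat) (a1 a2 : 'rV[R]_n) L :
  proj_inj_on a1 a2 L -> proj_inj_on a2 a1 L.
Proof. by move=> inj x y Lx Ly [e1 e2]; apply: inj. Qed.

Theorem theorem2p1 (R : realType) (n : nat) (hn : (2 <= n)%N)
    (a1 a2 : 'rV[R]_n) (hfree : free [:: a1; a2])
    (b1 b2 b3 c1 c2 c3 : 'rV[R]_n)
    (hb1 : b1 != 0) (hb2 : b2 != 0) (hb3 : b3 != 0)
    (h12 : ~ same_line b1 c1 b2 c2) (h13 : ~ same_line b1 c1 b3 c3)
    (h23 : ~ same_line b2 c2 b3 c3) :
  exists s : seq 'rV[R]_n,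
    is_closed_path a1 a2 s /\
    (forall x, x \in s -> on_line b1 c1 x \/ on_line b2 c2 x \/ on_line b3 c3 x).
Proof.
pose L x := on_line b1 c1 x \/ on_line b2 c2 x \/ on_line b3 c3 x.
have l1 x : on_line b1 c1 x -> L x by left.
have l2 x : on_line b2 c2 x -> L x by right; left.
have l3 x : on_line b3 c3 x -> L x by right; right.
have [//|inj] := closed_path_in_or_proj_inj a1 a2 L.
have vertical a a' : proj_inj_on a a' L ->
    [|| dotv a b1 == 0, dotv a b2 == 0 | dotv a b3 == 0] -> closed_path_in a a' L.
  move=> inja /or3P[] /eqP p.
  - exact: closed_path_of_vertical_line inja l1 l2 l3 hb1 hb2 hb3 h12 h13 h23 p.
  - exact: closed_path_of_vertical_line inja l2 l1 l3 hb2 hb1 hb3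
             (same_line_sym h12) h23 h13 p.
  - exact: closed_path_of_vertical_line inja l3 l1 l2 hb3 hb1 hb2
             (same_line_sym h13) (same_line_sym h23) h12 p.
have [/(vertical _ _ inj)//|] :=
  boolP [|| dotv a1 b1 == 0, dotv a1 b2 == 0 | dotv a1 b3 == 0].
have [/(vertical _ _ (proj_inj_on_swap inj))/closed_path_in_swap//|] :=
  boolP [|| dotv a2 b1 == 0, dotv a2 b2 == 0 | dotv a2 b3 == 0].
rewrite !negb_or => /and3P[r1 r2 r3] /and3P[p1 p2 p3].
exact: closed_path_of_graph_lines inj l1 l2 l3 h12 h13 h23 p1 p2 p3 r1 r2 r3.
Qed.
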